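(* Let $a,b$ be rational numbers with $a+b\in\mathbb{Z}$, and let $n$ be a nonnegative integer with $n\ge -(a+b)$. Then, as $z\to\infty$, $$\left(\frac{z-1}{2}\right)^a\left(\frac{z+1}{2}\right)^b J_n(a,b,z)-J_{n+a+b}(-a,-b,z)=O\big(z^{-(n+1)}\big),$$ i.e. the Laurent expansion at $\infty$ of the left-hand side contains only powers $z^j$ with $j\le -(n+1)$.
   Context: For a nonnegative integer $N$ and complex parameters $\alpha,\beta$, the (generalized) Jacobi polynomial is $$J_N(\alpha,\beta,x)=\sum_{j=0}^{N}\binom{N+\alpha+\beta+j}{j}\binom{N+\alpha}{N-j}\left(\frac{x-1}{2}\right)^j,$$ where $\binom{y}{j}=y(y-1)\cdots(y-j+1)/j!$ for arbitrary $y$. For rational $a,b$ with $a+b\in\mathbb Z$, the expression $(z-1)^a(z+1)^b$ denotes the single-valued function on $|z|>1$ given by $z^{a+b}(1-1/z)^a(1+1/z)^b$ (principal binomial series), i.e. the branch whose Laurent expansion at $\infty$ has leading term $z^{a+b}$ with coefficient $1$; and $\left(\frac{z-1}{2}\right)^a\left(\frac{z+1}{2}\right)^b$ means $2^{-(a+b)}(z-1)^a(z+1)^b$. Note $n+a+b$ is a nonnegative integer, so $J_{n+a+b}(-a,-b,z)$ is defined. *)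

From mathcomp Require Import all_boot all_order all_algebra.
Set Implicit Arguments. Unset Strict Implicit. Unset Printing Implicit Defensive.
Import Order.TTheory GRing.Theory Num.Theory.
Local Open Scope ring_scope.

Definition gbinom (y : rat) (j : nat) : rat :=
  (\prod_(i < j) (y - i%:R)) / (j`!)%:R.

Definition jacobi (N : nat) (al be : rat) : {poly rat} :=
  \sum_(j < N.+1)
     (gbinom (N%:R + al + be + j%:R) j * gbinom (N%:R + al) (N - j)) *:
       (('X - 1) * (2%:R)^-1%:P) ^+ j.

(* coefficient of w^k in (1 - w)^a (1 + w)^b (principal binomial series) *)
Definition binser_coef (a b : rat) (k : nat) : rat :=
  \sum_(i < k.+1) gbinom a i * (-1) ^+ i * gbinom b (k - i).

(* coefficient of z^m in the Laurent expansion at infinity of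
   ((z-1)/2)^a ((z+1)/2)^b = 2^-(a+b) z^(a+b) (1-1/z)^a (1+1/z)^b,
   where s = a + b is an integer *)
Definition prefactor_coef (a b : rat) (s : int) (m : int) : rat :=
  match (s - m)%R with
  | Posz k => (2%:R : rat) ^ (- s) * binser_coef a b k
  | Negz _ => 0
  end.

Definition pcoef (p : {poly rat}) (m : int) : rat :=
  match m with Posz k => p`_k | Negz _ => 0 end.

(* coefficient of z^m in the product of a Laurent series at infinity
   (given by its coefficient function f) with a polynomial p *)
Definition lmul_poly_coef (f : int -> rat) (p : {poly rat}) (m : int) : rat :=
  \sum_(d < size p) p`_d * f (m - d%:Z)%R.

From mathcomp Require Import all_boot all_order all_algebra.
From mathcomp Require Import zify ring.
From Stdlib Require Import FunctionalExtensionality.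
Import Order.TTheory GRing.Theory Num.Theory.
Local Open Scope ring_scope.

(* Both sides are Laurent series at infinity solving the Jacobi equation with parameters
   (-a, -b) and degree N = n + a + b.  For J_N(-a, -b) this is the classical equation.  For
   g J_n(a, b), with g = ((z - 1)/2)^a ((z + 1)/2)^b, it follows from the first order equation
   (z^2 - 1) g' = ((a + b) z + a - b) g, which conjugates the Jacobi operator of (a, b, n) into
   that of (-a, -b, N) up to the factor z^2 - 1; this factor cancels on series whose support is
   bounded above.  On coefficients the Jacobi equation is a three-term recurrence whose
   coefficient at z^m is (N - m) (n + m + 1), nonzero for -n <= m < N.  Both series vanish
   above z^N and have the same coefficient at z^N, so they agree down to z^(-n). *)

Lemma gbinom0 y : gbinom y 0 = 1.
Proof. by rewrite /gbinom big_ord0 fact0 divr1. Qed.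

Lemma fact_neq0 j : ((j`!)%:R : rat) != 0.
Proof. by rewrite pnatr_eq0 -lt0n fact_gt0. Qed.

Lemma gbinomS y j : gbinom y j.+1 * j.+1%:R = gbinom y j * (y - j%:R).
Proof.
rewrite /gbinom big_ord_recr /= factS natrM.
have hj : (j.+1%:R : rat) != 0 by rewrite pnatr_eq0.
by field; rewrite fact_neq0 addrC natr1 hj.
Qed.

Lemma gbinomSS y j : gbinom (y + 1) j.+1 * j.+1%:R = (y + 1) * gbinom y j.
Proof.
rewrite /gbinom big_ord_recl /= factS natrM subr0.
have hj : (j.+1%:R : rat) != 0 by rewrite pnatr_eq0.
have -> : \prod_(i < j) (y + 1 - (bump 0 i)%:R) = \prod_(i < j) (y - i%:R).
  by apply: eq_bigr => i _; rewrite /bump /= add1n -natr1; ring.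
by field; rewrite fact_neq0 addrC natr1 hj.
Qed.

Lemma gbinom_nat k j : gbinom k%:R j = 'C(k, j)%:R.
Proof.
elim: j => [|j IHj]; first by rewrite gbinom0 bin0.
have hj : (j.+1%:R : rat) != 0 by rewrite pnatr_eq0.
apply: (mulIf hj); rewrite gbinomS IHj -natrM mulnC mul_bin_left.
have [le_jk | lt_kj] := leqP j k; first by rewrite natrM natrB // mulrC.
by rewrite bin_small // muln0 mul0r.
Qed.

(* [h m] is the coefficient of [z^m]; [mulz], [derivz] and [mulz2B1] are multiplication by
   [z], [d/dz] and multiplication by [z^2 - 1]. *)
Definition laurent := int -> rat.

Definition mulz (h : laurent) : laurent := fun m => h (m - 1).

Definition derivz (h : laurent) : laurent := fun m => (m%:~R + 1) * h (m + 1).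

Definition mulz2B1 (h : laurent) : laurent := fun m => mulz (mulz h) m - h m.

Lemma mulz2B1_derivz h :
  mulz2B1 (derivz h) = fun m => derivz (mulz2B1 h) m - 2%:R * mulz h m.
Proof.
apply: functional_extensionality => m; rewrite /mulz2B1 /derivz /mulz.
have -> : m - 1 - 1 + 1 = m - 1 by ring.
have -> : m + 1 - 1 - 1 = m - 1 by ring.
by rewrite !rmorphB /=; ring.
Qed.

Local Notation lmul := lmul_poly_coef.

Section LaurentTimesPoly.
Implicit Types (f h : laurent) (p q : {poly rat}) (m : int).

Lemma lmul_widen f p m K : (size p <= K)%N ->
  lmul f p m = \sum_(d < K) p`_d * f (m - d%:Z).
Proof.
move=> hK; rewrite /lmul_poly_coef (big_ord_widen K (fun d => p`_d * f (m - d%:Z))) //.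
rewrite big_mkcond /=; apply: eq_bigr => i _.
by case: ltnP => // hi; rewrite nth_default // mul0r.
Qed.

Lemma lmulDl f h p m :
  lmul (fun k => f k + h k) p m = lmul f p m + lmul h p m.
Proof. by rewrite /lmul_poly_coef -big_split; apply: eq_bigr => i _; rewrite mulrDr. Qed.

Lemma lmulZl c f p m : lmul (fun k => c * f k) p m = c * lmul f p m.
Proof. by rewrite /lmul_poly_coef mulr_sumr; apply: eq_bigr => i _; rewrite mulrCA. Qed.

Lemma lmulDr f p q m : lmul f (p + q) m = lmul f p m + lmul f q m.
Proof.
rewrite !(@lmul_widen _ _ _ (maxn (size p) (size q))) ?leq_maxl ?leq_maxr ?size_polyD //.
by rewrite -big_split; apply: eq_bigr => i _; rewrite coefD mulrDl.
Qed.

Lemma lmulZr c f p m : lmul f (c *: p) m = c * lmul f p m.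
Proof.
rewrite !(@lmul_widen _ _ _ (size p)) ?size_scale_leq // mulr_sumr.
by apply: eq_bigr => i _; rewrite coefZ mulrA.
Qed.

Lemma lmulNr f p m : lmul f (- p) m = - lmul f p m.
Proof. by rewrite -scaleN1r lmulZr mulN1r. Qed.

Lemma lmulBr f p q m : lmul f (p - q) m = lmul f p m - lmul f q m.
Proof. by rewrite lmulDr lmulNr. Qed.

Lemma lmul0r f m : lmul f 0 m = 0.
Proof. by rewrite /lmul_poly_coef size_poly0 big_ord0. Qed.

Lemma lmul_mulz f p : lmul (mulz f) p = mulz (lmul f p).
Proof.
apply: functional_extensionality => m.
by rewrite /lmul_poly_coef /mulz; apply: eq_bigr => i _; congr (_ * f _); lia.
Qed.

Lemma lmul_mulX f p : lmul f ('X * p) = mulz (lmul f p).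
Proof.
apply: functional_extensionality => m.
have size_Xp : (size ('X * p)%R <= (size p).+1)%N.
  have [->|pn0] := eqVneq p 0; first by rewrite mulr0 size_poly0.
  by rewrite mulrC size_mulX.
rewrite (lmul_widen _ _ _ _ size_Xp) big_ord_recl coefXM eqxx mul0r add0r.
rewrite /mulz (@lmul_widen _ _ _ (size p)) //.
by apply: eq_bigr => i _; rewrite coefXM /=; congr (_ * f _); rewrite /bump /=; lia.
Qed.

Lemma lmul_mulz2B1 f p : lmul (mulz2B1 f) p = mulz2B1 (lmul f p).
Proof.
apply: functional_extensionality => m; rewrite /mulz2B1.
have -> : (fun k => mulz (mulz f) k - f k) = fun k => mulz (mulz f) k + (-1) * f k.
  by apply: functional_extensionality => k; rewrite mulN1r.
by rewrite lmulDl lmulZl !lmul_mulz mulN1r.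
Qed.

Lemma mulz2B1_lmul f p : mulz2B1 (lmul f p) = lmul f (('X^2 - 1) * p).
Proof.
apply: functional_extensionality => m.
by rewrite mulrBl mul1r expr2 -mulrA lmulBr !lmul_mulX.
Qed.

(* The coefficient [m + 1] of the derivative splits as [(m - d + 1) + d]. *)
Lemma derivz_lmul f p :
  derivz (lmul f p) = fun m => lmul (derivz f) p m + lmul f p^`() m.
Proof.
apply: functional_extensionality => m.
have size_p' : (size p^`() <= (size p).+1)%N.
  have [->|pn0] := eqVneq p 0; first by rewrite deriv0 size_poly0.
  exact: leq_trans (ltnW (lt_size_deriv pn0)) (leqnSn _).
rewrite /derivz !(@lmul_widen _ _ _ (size p).+1) ?leqnSn // mulr_sumr.
have -> : \sum_(i < (size p).+1) p^`()`_i * f (m - i%:Z)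
   = \sum_(i < (size p).+1) p`_i * (i%:R * f (m + 1 - i%:Z)).
  rewrite big_ord_recr /= coef_deriv nth_default // mul0rn mul0r addr0.
  rewrite big_ord_recl /= mul0r mulr0 add0r; apply: eq_bigr => i _.
  rewrite coef_deriv /bump /= add1n.
  have -> : m + 1 - (i.+1)%:Z = m - (i : nat)%:Z by lia.
  by rewrite mulrA mulr_natr.
rewrite -big_split; apply: eq_bigr => i _ /=.
have -> : m - i%:Z + 1 = m + 1 - i%:Z by lia.
rewrite mulrCA -mulrDr -mulrDl rmorphB /=; congr (_ * (_ * _)).
by rewrite -[((i : nat)%:Z)%:~R]/((i : nat)%:R : rat); ring.
Qed.

End LaurentTimesPoly.

Definition unitz : laurent := fun m => (m == 0)%:R.

Lemma lmul0l p m : lmul (fun=> 0) p m = 0.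
Proof. by rewrite /lmul_poly_coef big1 // => i _; rewrite mulr0. Qed.

Lemma pcoef_lmul p : pcoef p = lmul unitz p.
Proof.
apply: functional_extensionality => -[k|k] /=; rewrite /lmul_poly_coef /unitz.
  have -> : \sum_(d < size p) p`_d * (k%:Z - d%:Z == 0)%:R
      = \sum_(d < size p | d == k :> nat) p`_d.
    rewrite [RHS]big_mkcond; apply: eq_bigr => d _ /=.
    by rewrite subr_eq0 eqz_nat eq_sym; case: eqP; rewrite ?mulr1 ?mulr0.
  by rewrite big_ord1_eq; case: ltnP => // hk; rewrite nth_default.
by rewrite big1 // => d _; rewrite subr_eq0 /= mulr0.
Qed.

Lemma derivz_unitz : derivz unitz = fun=> 0.
Proof.
apply: functional_extensionality => m; rewrite /derivz /unitz.
case: eqP => [h|_]; last by rewrite mulr0.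
have -> : (m%:~R + 1 : rat) = (m + 1)%:~R by rewrite intrD.
by rewrite h mul0r.
Qed.

Lemma pcoef_derivz p : derivz (pcoef p) = pcoef p^`().
Proof.
rewrite !pcoef_lmul derivz_lmul derivz_unitz.
by apply: functional_extensionality => m; rewrite lmul0l add0r.
Qed.

Definition jacobiz (al be : rat) (K : nat) (h : laurent) : laurent := fun m =>
  - mulz2B1 (derivz (derivz h)) m + (be - al) * derivz h m
  - (al + be + 2%:R) * mulz (derivz h) m + K%:R * (K%:R + al + be + 1) * h m.

Definition jacobi_op (al be : rat) (K : nat) (p : {poly rat}) : {poly rat} :=
  - ('X^2 - 1) * p^`()^`() + ((be - al)%:P - (al + be + 2%:R)%:P * 'X) * p^`()
  + (K%:R * (K%:R + al + be + 1)) *: p.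

Lemma jacobizE al be K h m : jacobiz al be K h m =
  (m%:~R + 1) * (m%:~R + 2%:R) * h (m + 2%:Z) + (be - al) * (m%:~R + 1) * h (m + 1)
  + (K%:R - m%:~R) * (K%:R + m%:~R + al + be + 1) * h m.
Proof.
rewrite /jacobiz /mulz2B1 /mulz /derivz.
have -> : m - 1 - 1 + 1 + 1 = m by ring.
have -> : m - 1 - 1 + 1 = m - 1 by ring.
have -> : m - 1 + 1 = m by ring.
have -> : m + 1 + 1 = m + 2%:Z by ring.
rewrite !rmorphB !rmorphD /= -[(1%:Z)%:~R]/(1 : rat); ring.
Qed.

Lemma jacobizB al be K f h :
  jacobiz al be K (fun m => f m - h m) = fun m => jacobiz al be K f m - jacobiz al be K h m.
Proof. by apply: functional_extensionality => m; rewrite !jacobizE; ring. Qed.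

Lemma pcoef_jacobiz al be K p :
  jacobiz al be K (pcoef p) = pcoef (jacobi_op al be K p).
Proof.
have -> : jacobi_op al be K p = - (('X^2 - 1) * p^`()^`()) + (be - al) *: p^`()
    - (al + be + 2%:R) *: ('X * p^`()) + (K%:R * (K%:R + al + be + 1)) *: p.
  by rewrite /jacobi_op -!mul_polyC; ring.
apply: functional_extensionality => m.
rewrite /jacobiz !pcoef_derivz !pcoef_lmul mulz2B1_lmul -lmul_mulX.
by rewrite !(lmulDr, lmulBr, lmulNr, lmulZr).
Qed.

Lemma coefXderiv (R : nzSemiRingType) (p : {poly R}) i : ('X * p^`())`_i = i%:R * p`_i.
Proof.
by rewrite coefXM; case: i => [|i] /=; rewrite ?mul0r // coef_deriv mulr_natl.
Qed.

Lemma jacobi_termE j :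
  (('X - 1) * (2%:R^-1)%:P) ^+ j = (2%:R^-1 : rat) ^+ j *: ('X - 1%:P) ^+ j.
Proof. by rewrite exprMn -polyC_exp mulrC mul_polyC polyC1. Qed.

Section JacobiEquation.
Variables (K : nat) (al be : rat).

Let c (j : nat) : rat := gbinom (K%:R + al + be + j%:R) j * gbinom (K%:R + al) (K - j).
Let mu : rat := K%:R * (K%:R + al + be + 1).

Lemma jacobi_coef_rec k : (k < K)%N ->
  k.+1%:R * (k%:R + al + 1) * c k.+1 = (K%:R - k%:R) * (K%:R + k%:R + al + be + 1) * c k.
Proof.
move=> ltkK; rewrite /c.
have [j defK] : exists j, K = (k + j.+1)%N by exists (K - k.+1)%N; lia.
have -> : (K - k = j.+1)%N by lia.
have -> : (K - k.+1 = j)%N by lia.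
have absorb := gbinomSS (K%:R + al + be + k%:R) k.
have rec := gbinomS (K%:R + al) j.
have -> : K%:R + al + be + k.+1%:R = K%:R + al + be + k%:R + 1 by rewrite -natr1; ring.
have eK : (K%:R : rat) = k%:R + j%:R + 1 by rewrite defK natrD -natr1; ring.
transitivity ((gbinom (K%:R + al + be + k%:R + 1) k.+1 * k.+1%:R) *
              (gbinom (K%:R + al) j * (K%:R + al - j%:R))); first by rewrite eK; ring.
by rewrite absorb -rec eK -!natr1; ring.
Qed.

Let P : {poly rat} := \poly_(j < K.+1) (c j * 2%:R^-1 ^+ j).

Lemma jacobi_comp : jacobi K al be = P \Po ('X - 1).
Proof.
rewrite comp_polyE (big_ord_widen K.+1 (fun i => P`_i *: ('X - 1) ^+ i)) ?size_poly //.
rewrite big_mkcond /jacobi; apply: eq_bigr => i _ /=.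
have -> : (if (i < size P)%N then P`_i *: ('X - 1) ^+ i else 0) = P`_i *: ('X - 1) ^+ i.
  by case: ltnP => // hi; rewrite nth_default // scale0r.
by rewrite coef_poly ltn_ord jacobi_termE scalerA polyC1.
Qed.

(* The Jacobi operator in the variable [t = x - 1]. *)
Let shifted_op (Q : {poly rat}) : {poly rat} :=
  - (('X + 1) * ('X + 1) - 1) * Q^`()^`()
  + ((be - al)%:P - (al + be + 2%:R)%:P * ('X + 1)) * Q^`() + mu *: Q.

Lemma jacobi_op_comp Q : jacobi_op al be K (Q \Po ('X - 1)) = shifted_op Q \Po ('X - 1).
Proof.
have dX : ('X - 1 : {poly rat})^`() = 1 by rewrite derivB derivX derivC subr0.
rewrite /jacobi_op /shifted_op !deriv_comp dX !mulr1 deriv_comp dX mulr1.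
rewrite !(comp_polyD, comp_polyB, comp_polyM, comp_polyZ) !raddfN /=.
rewrite !(comp_polyD, comp_polyB, comp_polyM, comp_polyC, comp_polyX) -!mul_polyC.
by ring.
Qed.

Lemma coef_shifted_op Q k : (shifted_op Q)`_k =
  (K%:R - k%:R) * (K%:R + k%:R + al + be + 1) * Q`_k
  - 2%:R * k.+1%:R * (k%:R + al + 1) * Q`_k.+1.
Proof.
have -> : shifted_op Q = - ('X * ('X * Q^`()^`())) - ('X * Q^`()^`()) *+ 2
   + (be - al)%:P * Q^`() - (al + be + 2%:R)%:P * ('X * Q^`())
   - (al + be + 2%:R)%:P * Q^`() + mu *: Q.
  by rewrite /shifted_op -!mul_polyC; ring.
rewrite !coefD ?coefB !coefN coefMn !coefCM coefZ !coefXderiv coefXM !coef_deriv.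
by case: k => [|k] /=; rewrite ?coefXderiv ?coef_deriv /mu; ring.
Qed.

Lemma shifted_op_P : shifted_op P = 0.
Proof.
apply/polyP => k; rewrite coef_shifted_op coef0 !coef_poly.
case: (ltngtP k K) => hk.
- rewrite ltnS (ltnW hk) ltnS hk.
  transitivity (2%:R^-1 ^+ k * ((K%:R - k%:R) * (K%:R + k%:R + al + be + 1) * c k
     - (2%:R * 2%:R^-1) * (k.+1%:R * (k%:R + al + 1) * c k.+1))); first by rewrite exprS; ring.
  by rewrite jacobi_coef_rec // mulfV ?pnatr_eq0 // mul1r subrr mulr0.
- have /negbTE -> : ~~ (k < K.+1)%N by rewrite -leqNgt.
  have /negbTE -> : ~~ (k.+1 < K.+1)%N by rewrite -leqNgt ltnW.
  by ring.
- by rewrite hk ltnSn ltnn subrr; ring.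
Qed.

Lemma jacobi_opP : jacobi_op al be K (jacobi K al be) = 0.
Proof. by rewrite jacobi_comp jacobi_op_comp shifted_op_P comp_poly0. Qed.

End JacobiEquation.

Lemma size_jacobi K al be : (size (jacobi K al be) <= K.+1)%N.
Proof.
rewrite /jacobi; elim/big_ind: _ => [|p q hp hq|i _]; first by rewrite size_poly0.
  by rewrite (leq_trans (size_polyD _ _)) // geq_max hp hq.
rewrite jacobi_termE scalerA (leq_trans (size_scale_leq _ _)) //.
by rewrite size_exp_XsubC.
Qed.

Lemma coef_jacobi_top K al be :
  (jacobi K al be)`_K = gbinom (K%:R + al + be + K%:R) K * 2%:R^-1 ^+ K.
Proof.
rewrite /jacobi coef_sum big_ord_recr /= big1 => [|i _].
  rewrite add0r jacobi_termE !coefZ subnn gbinom0 mulr1.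
  have := monic_exp K (monicXsubC (1 : rat)); rewrite qualifE => /eqP.
  by rewrite lead_coefE size_exp_XsubC /= => ->; rewrite mulr1.
by rewrite jacobi_termE !coefZ nth_default ?mulr0 // size_exp_XsubC.
Qed.

Lemma dvdp_XnP (R : idomainType) (M : nat) (p : {poly R}) :
  reflect (forall i, (i < M)%N -> p`_i = 0) ('X^M %| p).
Proof.
apply: (iffP (modp_eq0P _ _)); rewrite -Pdiv.IdomainMonic.take_poly_modp => h.
  by move=> i hi; have := congr1 (fun q : {poly R} => q`_i) h; rewrite coef_take_poly hi coef0.
by apply/polyP => i; rewrite coef_take_poly coef0; case: ifP => // /h.
Qed.

(* The differential equation (x^2 - 1) y' = ((a + b) x + a - b) y of the Jacobi weight
   (x - 1)^a (x + 1)^b, on coefficients. *)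
Definition weight_ode (a b : rat) (h : laurent) : Prop :=
  mulz2B1 (derivz h) = fun m => (a + b) * mulz h m + (a - b) * h m.

Lemma pcoef_weight_residual a b p :
  pcoef (('X^2 - 1) * p^`() - ((a + b)%:P * 'X + (a - b)%:P) * p)
  = fun m => mulz2B1 (derivz (pcoef p)) m - ((a + b) * mulz (pcoef p) m + (a - b) * pcoef p m).
Proof.
have -> : ('X^2 - 1) * p^`() - ((a + b)%:P * 'X + (a - b)%:P) * p
    = ('X^2 - 1) * p^`() - ((a + b) *: ('X * p) + (a - b) *: p).
  by rewrite -!mul_polyC; ring.
apply: functional_extensionality => m.
rewrite pcoef_derivz !pcoef_lmul mulz2B1_lmul -lmul_mulX.
by rewrite lmulBr lmulDr !lmulZr.
Qed.

Definition binser (a b : rat) : laurent :=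
  fun k => if k is Posz i then binser_coef a b i else 0.

Section BinomialSeries.
Variables (a b : rat).

(* Truncations of (1 - w)^a and (1 + w)^b: their product solves the weight equation
   modulo [w^(M-1)]. *)
Let A (M : nat) : {poly rat} := \poly_(i < M) (gbinom a i * (-1) ^+ i).
Let C (M : nat) : {poly rat} := \poly_(i < M) (gbinom b i).

Lemma binom_trunc_odeN M : 'X^(M.-1) %| (1 - 'X) * (A M)^`() + a *: A M.
Proof.
apply/dvdp_XnP => i hi.
rewrite mulrBl mul1r coefD coefB coefXderiv coef_deriv coefZ !coef_poly.
have -> : (i.+1 < M)%N by lia.
have -> : (i < M)%N by lia.
rewrite -mulr_natr exprS.
transitivity ((-1) ^+ i * (gbinom a i * (a - i%:R) - gbinom a i.+1 * i.+1%:R)); first ring.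
by rewrite gbinomS subrr mulr0.
Qed.

Lemma binom_trunc_odeD M : 'X^(M.-1) %| (1 + 'X) * (C M)^`() - b *: C M.
Proof.
apply/dvdp_XnP => i hi.
rewrite mulrDl mul1r coefB coefD coefXderiv coef_deriv coefZ !coef_poly.
have -> : (i.+1 < M)%N by lia.
have -> : (i < M)%N by lia.
rewrite -mulr_natr.
transitivity (gbinom b i.+1 * i.+1%:R - gbinom b i * (b - i%:R)); first ring.
by rewrite gbinomS subrr.
Qed.

Lemma binom_trunc_weight_ode M :
  'X^(M.-1) %| ('X^2 - 1) * (A M * C M)^`() - ((a + b)%:P * 'X + (a - b)%:P) * (A M * C M).
Proof.
have -> : ('X^2 - 1) * (A M * C M)^`() - ((a + b)%:P * 'X + (a - b)%:P) * (A M * C M)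
  = - (((1 + 'X) * C M) * ((1 - 'X) * (A M)^`() + a *: A M)
       + ((1 - 'X) * A M) * ((1 + 'X) * (C M)^`() - b *: C M)).
  by rewrite derivM -!mul_polyC polyCB polyCD; ring.
by rewrite dvdpNr dvdp_add // dvdp_mull // (binom_trunc_odeN, binom_trunc_odeD).
Qed.

Lemma pcoef_binom_trunc M (k : int) : k < M%:Z -> pcoef (A M * C M) k = binser a b k.
Proof.
case: k => [k|k] //= ltkM; rewrite coefM /binser_coef; apply: eq_bigr => i _.
have hi : (i < M)%N by have := ltn_ord i; lia.
have hki : (k - i < M)%N by lia.
by rewrite !coef_poly hi hki.
Qed.

Lemma binser_weight_ode : weight_ode a b (binser a b).
Proof.
apply: functional_extensionality => k.
have res M : (absz k + 3 <= M)%N -> pcoef (('X^2 - 1) * (A M * C M)^`()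
                  - ((a + b)%:P * 'X + (a - b)%:P) * (A M * C M)) k = 0.
  case: k => [k|k] hM //=; move/dvdp_XnP: (binom_trunc_weight_ode M); apply; lia.
move: (res _ (leqnn _)); rewrite pcoef_weight_residual /mulz2B1 /mulz /derivz.
rewrite !pcoef_binom_trunc; try lia.
by move/eqP; rewrite subr_eq0 => /eqP.
Qed.

End BinomialSeries.

Lemma prefactor_coefE a b s m :
  prefactor_coef a b s m = (2%:R : rat) ^ (- s) * binser a b (s - m).
Proof. by rewrite /prefactor_coef; case: (s - m) => //= k; rewrite mulr0. Qed.

(* With [a + b = s], the equation is invariant under the reflection [m |-> s - m]: this turns
   the power series (1 - w)^a (1 + w)^b into the expansion at infinity of the weight. *)
Lemma weight_ode_reflect a b s c u : a + b = s%:~R -> weight_ode a b u ->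
  weight_ode a b (fun m => c * u (s - m)).
Proof.
move=> hs ode; apply: functional_extensionality => m.
have := congr1 (fun h => h (s - m)) ode; rewrite /mulz2B1 /mulz /derivz /=.
have -> : s - m - 1 - 1 + 1 = s - (m + 1) by ring.
have -> : s - m + 1 = s - (m - 1) by ring.
have -> : s - m - 1 = s - (m + 1) by ring.
have -> : m - 1 - 1 + 1 = m - 1 by ring.
rewrite !rmorphB /= => /eqP; rewrite -subr_eq0 => /eqP e.
apply/eqP; rewrite -subr_eq0 -[0](mulr0 c) -e -hs; apply/eqP.
by rewrite !rmorphD /=; ring.
Qed.

Lemma prefactor_weight_ode {a b : rat} {s : int} :
  a + b = s%:~R -> weight_ode a b (prefactor_coef a b s).
Proof.
move=> hs; have -> : prefactor_coef a b s = fun m => 2%:R ^ (- s) * binser a b (s - m).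
  by apply: functional_extensionality => m; rewrite prefactor_coefE.
exact: weight_ode_reflect hs (binser_weight_ode a b).
Qed.

Definition weighted_deriv (a b : rat) (p : {poly rat}) : {poly rat} :=
  ((a + b)%:P * 'X + (a - b)%:P) * p + ('X^2 - 1) * p^`().

Section WeightTimesPoly.
Variables (a b : rat) (g : laurent).
Hypothesis g_ode : weight_ode a b g.

Lemma mulz2B1_derivz_lmul p :
  mulz2B1 (derivz (lmul g p)) = lmul g (weighted_deriv a b p).
Proof.
rewrite derivz_lmul; apply: functional_extensionality => m.
transitivity (mulz2B1 (lmul (derivz g) p) m + mulz2B1 (lmul g p^`()) m).
  by rewrite /mulz2B1 /mulz; ring.
rewrite -lmul_mulz2B1 g_ode lmulDl !lmulZl lmul_mulz mulz2B1_lmul -lmul_mulX.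
have -> : weighted_deriv a b p = (a + b) *: ('X * p) + (a - b) *: p + ('X^2 - 1) * p^`().
  by rewrite /weighted_deriv -!mul_polyC; ring.
by rewrite !lmulDr !lmulZr.
Qed.

Variables (n N : nat).
Hypothesis hN : N%:R = n%:R + a + b.

Lemma mulz2B1_jacobiz_lmul p :
  mulz2B1 (jacobiz (- a) (- b) N (lmul g p)) = lmul g (('X^2 - 1) * jacobi_op a b n p).
Proof.
apply: functional_extensionality => m.
set V := lmul g p; set W := weighted_deriv a b.
pose lam := (n%:R + a + b) * (n%:R + 1).
have expand : mulz2B1 (jacobiz (- a) (- b) N V) m =
    - mulz2B1 (mulz2B1 (derivz (derivz V))) m + (a - b) * mulz2B1 (derivz V) m
    - (2%:R - (a + b)) * mulz2B1 (derivz V) (m - 1) + lam * mulz2B1 V m.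
  by rewrite /jacobiz /mulz2B1 /mulz /lam hN; ring.
have MMDD : mulz2B1 (mulz2B1 (derivz (derivz V))) m
    = lmul g (W (W p)) m - 2%:R * lmul g (W p) (m - 1).
  rewrite mulz2B1_derivz.
  transitivity (mulz2B1 (derivz (mulz2B1 (derivz V))) m - 2%:R * mulz2B1 (derivz V) (m - 1)).
    by rewrite /mulz2B1 /mulz; ring.
  by rewrite /V !mulz2B1_derivz_lmul.
have -> : ('X^2 - 1) * jacobi_op a b n p
    = - W (W p) + (a + b) *: ('X * W p) + (a - b) *: W p + lam *: (('X^2 - 1) * p).
  rewrite /W /weighted_deriv /jacobi_op /lam !derivE -!mul_polyC.
  by rewrite !(polyCD, polyCN, polyCB, polyCM, polyC_natr); ring.
rewrite expand MMDD /V mulz2B1_derivz_lmul mulz2B1_lmul -/W.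
move: (W (W p)) (W p) => WWp Wp.
by rewrite !(lmulDr, lmulNr, lmulZr) lmul_mulX /mulz; ring.
Qed.

End WeightTimesPoly.

Lemma mulz2B1_eq0 (h : laurent) (K : int) :
  mulz2B1 h = (fun=> 0) -> (forall k, K < k -> h k = 0) -> h = fun=> 0.
Proof.
move=> h2 htop; apply: functional_extensionality => m.
have step k : h k = h (k + 2%:Z).
  have := congr1 (fun f => f (k + 2%:Z)) h2; rewrite /mulz2B1 /mulz /=.
  have -> : k + 2%:Z - 1 - 1 = k by ring.
  by move/eqP; rewrite subr_eq0 => /eqP.
suff vanish t : forall k, K < k + t%:Z -> h k = 0 by apply: (vanish (absz (K - m)).+1); lia.
elim: t => [|t IHt] k hk; first by apply: htop; lia.
by rewrite step; apply: IHt; lia.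
Qed.

Lemma jacobiz_top al be K (h : laurent) (S : int) :
  (forall k, S < k -> h k = 0) -> forall k, S < k -> jacobiz al be K h k = 0.
Proof. by move=> htop k hk; rewrite jacobizE !htop ?mulr0 ?addr0 //; lia. Qed.

(* By [jacobizE], [h m] is determined by [h (m + 1)] and [h (m + 2)] as long as
   [(K - m) (K + m + al + be + 1) != 0]. *)
Lemma jacobiz_eq0_down al be K (h : laurent) (m0 : int) :
  jacobiz al be K h = (fun=> 0) -> (forall k, K%:Z < k -> h k = 0) -> h K = 0 ->
  (forall m, m0 <= m -> m < K%:Z -> K%:R + m%:~R + al + be + 1 != 0) ->
  forall m, m0 <= m -> h m = 0.
Proof.
move=> sol htop hK nz.
have down t : m0 <= K%:Z - t%:Z -> h (K%:Z - t%:Z) = 0 /\ h (K%:Z - t%:Z + 1) = 0.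
  elim: t => [|t IHt] ht; first by rewrite subr0 hK htop //; lia.
  have [h0 h1] : h (K%:Z - t%:Z) = 0 /\ h (K%:Z - t%:Z + 1) = 0 by apply: IHt; lia.
  have := congr1 (fun f => f (K%:Z - t.+1%:Z)) sol; rewrite /= jacobizE.
  have -> : K%:Z - t.+1%:Z + 2%:Z = K%:Z - t%:Z + 1 by lia.
  have -> : K%:Z - t.+1%:Z + 1 = K%:Z - t%:Z by lia.
  rewrite h0 h1 !mulr0 !add0r => /eqP; rewrite !mulf_eq0 => /orP[/orP[c0|c1]|/eqP //].
    by rewrite -[K%:R]/((K%:Z)%:~R : rat) -rmorphB intr_eq0 in c0; lia.
  by rewrite (negbTE (nz _ _ _)) in c1; lia.
move=> m hm; have [/htop //|leKm] := ltP K%:Z m.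
have [+ _] := down (absz (K%:Z - m)) ltac:(lia).
by have -> : K%:Z - (absz (K%:Z - m))%:Z = m by lia.
Qed.

Lemma pcoef_top (p : {poly rat}) (d : nat) (k : int) :
  (size p <= d.+1)%N -> d%:Z < k -> pcoef p k = 0.
Proof.
case: k => [k|k] hp //= hk; rewrite nth_default //.
by rewrite ltz_nat in hk; apply: leq_trans hp hk.
Qed.

Lemma lmul_top (f : laurent) (p : {poly rat}) (S : int) (d : nat) :
  (size p <= d.+1)%N -> (forall k, S < k -> f k = 0) ->
  forall k, S + d%:Z < k -> lmul f p k = 0.
Proof.
move=> hp ftop k hk; rewrite (lmul_widen _ _ _ _ hp) big1 // => i _.
by rewrite ftop ?mulr0 //; have := ltn_ord i; lia.
Qed.

Lemma prefactor_coef_top a b s k : s < k -> prefactor_coef a b s k = 0.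
Proof.
move=> hk; have : s - k < 0 by rewrite subr_lt0.
by rewrite /prefactor_coef; case: (s - k).
Qed.

Lemma prefactor_coef_diag a b s : prefactor_coef a b s s = (2%:R : rat) ^ (- s).
Proof.
rewrite prefactor_coefE subrr -[0 : int]/(Posz 0) /= /binser_coef big_ord1 /=.
by rewrite !gbinom0 !mulr1.
Qed.

Lemma degree_shiftE {a b : rat} {s : int} {n N : nat} :
  a + b = s%:~R -> N%:Z = n%:Z + s -> N%:R = n%:R + a + b :> rat.
Proof.
move=> hs hN; have : (N%:Z)%:~R = (n%:Z + s)%:~R :> rat by rewrite hN.
by rewrite rmorphD /= -hs addrA.
Qed.

Lemma lmul_prefactor_jacobi_top a b (s : int) (n N : nat) :
  a + b = s%:~R -> N%:Z = n%:Z + s ->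
  lmul (prefactor_coef a b s) (jacobi n a b) N = pcoef (jacobi N (- a) (- b)) N.
Proof.
move=> hs hN; have NR := degree_shiftE hs hN.
rewrite (lmul_widen _ _ _ _ (size_jacobi n a b)) big_ord_recr /= big1 => [|d _]; last first.
  by rewrite prefactor_coef_top ?mulr0 //; have := ltn_ord d; lia.
have -> : N%:Z - n%:Z = s by lia.
rewrite add0r !coef_jacobi_top prefactor_coef_diag.
have -> : n%:R + a + b + n%:R = (N + n)%:R :> rat by rewrite natrD NR; ring.
have -> : N%:R - a - b + N%:R = (N + n)%:R :> rat by rewrite natrD NR; ring.
rewrite !gbinom_nat.
have -> : 'C(N + n, N) = 'C(N + n, n) by rewrite -{2}(addnK n N) bin_sub // leq_addl.
have -> : - s = n%:Z + (- N%:Z) by lia.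
have u2 : (2%:R : rat) \is a GRing.unit by rewrite unitfE pnatr_eq0.
rewrite exprzDr // -exprnN !exprVn -[(2%:R : rat) ^ n%:Z]/(2%:R ^+ n).
have h2 : (2%:R : rat) ^+ n != 0 by rewrite expf_neq0 // pnatr_eq0.
by field; rewrite h2 expf_neq0 // pnatr_eq0.
Qed.

Theorem mainTheorem3 (a b : rat) (s : int) (n N : nat)
  (hs : a + b = s%:~R) (hn : - s <= n%:Z) (hN : N%:Z = n%:Z + s)
  (m : int) (hm : - (n%:Z) <= m) :
  lmul_poly_coef (prefactor_coef a b s) (jacobi n a b) m
    - pcoef (jacobi N (- a) (- b)) m = 0.
Proof.
(* [hn] is implied by [hN], [N] being a natural number. *)
have NR := degree_shiftE hs hN.
set g := prefactor_coef a b s; set p := jacobi n a b; set q := jacobi N (- a) (- b).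
have gp_top k : N%:Z < k -> lmul g p k = 0.
  move=> hk; apply: (@lmul_top g p s n (size_jacobi n a b)) => [j|]; last lia.
  exact: prefactor_coef_top.
have q_top k : N%:Z < k -> pcoef q k = 0 by apply: pcoef_top (size_jacobi N _ _).
have gp_sol : jacobiz (- a) (- b) N (lmul g p) = fun=> 0.
  apply: (@mulz2B1_eq0 _ N%:Z); last exact: jacobiz_top gp_top.
  rewrite (mulz2B1_jacobiz_lmul _ _ _ (prefactor_weight_ode hs) _ _ NR) jacobi_opP mulr0.
  by apply: functional_extensionality => k; rewrite lmul0r.
have q_sol : jacobiz (- a) (- b) N (pcoef q) = fun=> 0.
  rewrite pcoef_jacobiz jacobi_opP.
  by apply: functional_extensionality => -[k|k] //=; rewrite coef0.
apply: (@jacobiz_eq0_down (- a) (- b) N (fun k => lmul g p k - pcoef q k) (- n%:Z)) => //.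
- by rewrite jacobizB gp_sol q_sol; apply: functional_extensionality => k; rewrite subrr.
- by move=> k hk; rewrite gp_top ?q_top ?subrr.
- by rewrite lmul_prefactor_jacobi_top // subrr.
move=> k hk _; rewrite NR.
have -> : n%:R + a + b + k%:~R + - a + - b + 1 = (n%:Z + k + 1)%:~R :> rat.
  by rewrite !rmorphD /=; ring.
by rewrite intr_eq0; apply/eqP; lia.
Qed.
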